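(* Let $S=G\times E$ be a right group with $G$ an infinite group and $E$ a right zero semigroup, and let $T$ be a subsemigroup of $S$ of finite Green index. Then $T=H\times E$ for some subgroup $H$ of finite index in $G$; in particular $T$ is a right group.
   Context: A right zero semigroup is a semigroup $E$ with $ef=f$ for all $e,f\in E$; a right group is a direct product $G\times E$ of a group and a right zero semigroup, with componentwise multiplication $(g,e)(h,f)=(gh,f)$. For a subsemigroup $T$ of a semigroup $S$, the relative Green's relations on $S$ are: $u\,\mathcal{R}^T v$ iff $uT^1=vT^1$, $u\,\mathcal{L}^T v$ iff $T^1u=T^1v$, and $\mathcal{H}^T=\mathcal{R}^T\cap\mathcal{L}^T$, where $T^1=T\cup\{1\}$. The Green index of $T$ in $S$ is one plus the number of $\mathcal{H}^T$-classes contained in $S\setminus T$. *)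

From Stdlib Require Import List.

Set Implicit Arguments.

Definition is_group (G : Type) (mul : G -> G -> G) (one : G) (inv : G -> G) : Prop :=
  (forall x y z, mul (mul x y) z = mul x (mul y z)) /\
  (forall x, mul one x = x) /\ (forall x, mul x one = x) /\
  (forall x, mul (inv x) x = one) /\ (forall x, mul x (inv x) = one).

Definition infinite_type (X : Type) : Prop :=
  forall l : list X, exists x, ~ In x l.

Definition is_right_zero_semigroup (E : Type) (op : E -> E -> E) : Prop :=
  forall e f, op e f = f.

Definition rg_mul (G E : Type) (mul : G -> G -> G) (op : E -> E -> E)
  (u v : G * E) : G * E := (mul (fst u) (fst v), op (snd u) (snd v)).

Definition is_subsemigroup (S : Type) (m : S -> S -> S) (T : S -> Prop) : Prop :=
  forall x y, T x -> T y -> T (m x y).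

(* Membership in u T^1 = {u} ∪ uT, and in T^1 u. *)
Definition in_rideal1 (S : Type) (m : S -> S -> S) (T : S -> Prop) (u x : S) : Prop :=
  x = u \/ exists t, T t /\ x = m u t.
Definition in_lideal1 (S : Type) (m : S -> S -> S) (T : S -> Prop) (u x : S) : Prop :=
  x = u \/ exists t, T t /\ x = m t u.

Definition relR (S : Type) (m : S -> S -> S) (T : S -> Prop) (u v : S) : Prop :=
  forall x, in_rideal1 m T u x <-> in_rideal1 m T v x.
Definition relL (S : Type) (m : S -> S -> S) (T : S -> Prop) (u v : S) : Prop :=
  forall x, in_lideal1 m T u x <-> in_lideal1 m T v x.
Definition relH (S : Type) (m : S -> S -> S) (T : S -> Prop) (u v : S) : Prop :=
  relR m T u v /\ relL m T u v.

Definition finite_green_index (S : Type) (m : S -> S -> S) (T : S -> Prop) : Prop :=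
  exists l : list S,
    (forall r, In r l -> ~ T r) /\
    (forall u, ~ T u -> exists r, In r l /\ relH m T u r).

Definition is_subgroup (G : Type) (mul : G -> G -> G) (one : G) (inv : G -> G)
  (H : G -> Prop) : Prop :=
  H one /\ (forall x y, H x -> H y -> H (mul x y)) /\ (forall x, H x -> H (inv x)).

Definition finite_index (G : Type) (mul : G -> G -> G) (H : G -> Prop) : Prop :=
  exists l : list G, forall x, exists g h, In g l /\ H h /\ x = mul g h.

(* Fix e and let P = {g | (g, e) ∈ T}, a subsemigroup of G.  If (x, e) ∉ T is
   H^T-related to r, then r = (r', e) and x, r' divide each other on the right
   inside P^1, so G \ P is covered by finitely many such "right P^1-classes".
   For x ∈ P, some power x^-k (k >= 1) lies in P^1: otherwise two of them,
   x^-i and x^-j with i < j, share a class and their quotient x^-(j-i) lies in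
   P^1 after all.  Hence x^-1 = x^(k-1) x^-k ∈ P^1.
   So P is a subgroup (nonempty because G is infinite), of finite index since the
   class representatives together with 1 are coset representatives.  Finally
   (g, e)(1, f) = (g, f) shows that the fibre P does not depend on e. *)

From Stdlib Require Import List Classical Lia.

Set Implicit Arguments.

Lemma pigeonhole_infinitely_often (A : Type) (rs : list A) (B : A -> nat -> Prop) :
  (forall N, exists n r, N <= n /\ In r rs /\ B r n) ->
  exists r i j, i < j /\ B r i /\ B r j.
Proof.
  revert B; induction rs as [|a rs IH]; intros B Hinf.
  - destruct (Hinf 0) as (n & r & _ & [] & _).
  - destruct (classic (forall N, exists n, N <= n /\ B a n)) as [Ha | Ha].
    + destruct (Ha 0) as (i & _ & Hi).
      destruct (Ha (S i)) as (j & Hij & Hj).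
      exists a, i, j; auto.
    + apply not_all_ex_not in Ha as [N HN].
      apply IH. intro M.
      destruct (Hinf (max N M)) as (n & r & Hn & [<- | Hr] & Hrn).
      * exfalso. apply HN. exists n. split; [lia | exact Hrn].
      * exists n, r. repeat split; auto. lia.
Qed.

Lemma relR_in_rideal1 (S : Type) (m : S -> S -> S) (T : S -> Prop) u v :
  relR m T u v -> in_rideal1 m T u v /\ in_rideal1 m T v u.
Proof.
  intro H. split.
  - apply H. left. reflexivity.
  - apply (H u). left. reflexivity.
Qed.

Lemma relL_in_lideal1 (S : Type) (m : S -> S -> S) (T : S -> Prop) u v :
  relL m T u v -> in_lideal1 m T u v.
Proof. intro H. apply H. left. reflexivity. Qed.

Section Group.

Variables (G : Type) (mul : G -> G -> G) (one : G) (inv : G -> G).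
Hypothesis hG : is_group mul one inv.

Lemma mulA x y z : mul (mul x y) z = mul x (mul y z).
Proof. apply hG. Qed.

Lemma mul1g x : mul one x = x.
Proof. apply hG. Qed.

Lemma mulg1 x : mul x one = x.
Proof. apply hG. Qed.

Lemma mulVg x : mul (inv x) x = one.
Proof. apply hG. Qed.

Lemma mulgV x : mul x (inv x) = one.
Proof. apply hG. Qed.

Lemma mulKg a b : mul (inv a) (mul a b) = b.
Proof. rewrite <- mulA, mulVg, mul1g. reflexivity. Qed.

Lemma inv_eq_one x : inv x = one -> x = one.
Proof. intro Hx. rewrite <- (mulg1 x), <- Hx at 1. apply mulgV. Qed.

Fixpoint gpow (a : G) (n : nat) : G :=
  match n with 0 => one | S n => mul a (gpow a n) end.

Lemma gpow_add a m n : gpow a (m + n) = mul (gpow a m) (gpow a n).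
Proof.
  induction m as [|m IH]; simpl.
  - rewrite mul1g. reflexivity.
  - rewrite IH, mulA. reflexivity.
Qed.

Lemma gpowSr a n : gpow a (S n) = mul (gpow a n) a.
Proof. rewrite <- PeanoNat.Nat.add_1_r, gpow_add. simpl. rewrite mulg1. reflexivity. Qed.

Lemma gpow_mul_gpowS_inv x n : mul (gpow x n) (gpow (inv x) (S n)) = inv x.
Proof.
  induction n as [|n IH].
  - simpl. rewrite mul1g, mulg1. reflexivity.
  - rewrite gpowSr.
    change (gpow (inv x) (S (S n))) with (mul (inv x) (gpow (inv x) (S n))).
    rewrite mulA, <- (mulA x), mulgV, mul1g. exact IH.
Qed.

Section Cover.

Variable P : G -> Prop.
Hypothesis hP : is_subsemigroup mul P.

Definition with_one (x : G) : Prop := x = one \/ P x.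

Lemma with_one_mul a b : with_one a -> with_one b -> with_one (mul a b).
Proof.
  intros [-> | Ha] [-> | Hb].
  - left. apply mul1g.
  - right. rewrite mul1g. exact Hb.
  - right. rewrite mulg1. exact Ha.
  - right. apply hP; assumption.
Qed.

Lemma with_one_gpow x n : with_one x -> with_one (gpow x n).
Proof.
  intro Hx. induction n as [|n IH].
  - left. reflexivity.
  - apply with_one_mul; assumption.
Qed.

Lemma with_one_inv_of_gpow x k :
  with_one x -> with_one (gpow (inv x) (S k)) -> with_one (inv x).
Proof.
  intros Hx Hk. rewrite <- (gpow_mul_gpowS_inv x k).
  apply with_one_mul; [apply with_one_gpow |]; assumption.
Qed.

Lemma with_one_left_quotient y r w :
  in_rideal1 mul P y r -> in_rideal1 mul P r w -> with_one (mul (inv y) w).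
Proof.
  intros Hr Hw.
  assert (Hr' : exists b, with_one b /\ r = mul y b).
  { destruct Hr as [-> | (b & Hb & ->)].
    - exists one. split; [left; reflexivity | symmetry; apply mulg1].
    - exists b. split; [right |]; auto. }
  assert (Hw' : exists a, with_one a /\ w = mul r a).
  { destruct Hw as [-> | (a & Ha & ->)].
    - exists one. split; [left; reflexivity | symmetry; apply mulg1].
    - exists a. split; [right |]; auto. }
  destruct Hr' as (b & Hb & ->), Hw' as (a & Ha & ->).
  rewrite mulA, mulKg. apply with_one_mul; assumption.
Qed.

Variable rs : list G.
Hypothesis hcover : forall x, ~ P x ->
  exists r, In r rs /\ in_rideal1 mul P x r /\ in_rideal1 mul P r x.

Lemma with_one_some_gpow_inv x : exists k, with_one (gpow (inv x) (S k)).
Proof.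
  apply NNPP. intro Hnone.
  assert (Hout : forall n, ~ P (gpow (inv x) (S n))).
  { intros n Hn. apply Hnone. exists n. right. exact Hn. }
  destruct (pigeonhole_infinitely_often rs
              (fun r n => in_rideal1 mul P (gpow (inv x) (S n)) r /\
                          in_rideal1 mul P r (gpow (inv x) (S n))))
    as (r & i & j & Hij & [Hi _] & [_ Hj]).
  { intro N. destruct (hcover (Hout N)) as (r & Hr & HN).
    exists N, r. auto. }
  apply Hnone. exists (j - S i).
  replace (gpow (inv x) (S j)) with (gpow (inv x) (S i + S (j - S i))) in Hj
    by (f_equal; lia).
  rewrite gpow_add in Hj.
  pose proof (with_one_left_quotient Hi Hj) as Hq.
  rewrite mulKg in Hq. exact Hq.
Qed.

Lemma inv_mem_of_cover x : P x -> P (inv x).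
Proof.
  intro Hx.
  destruct (with_one_some_gpow_inv x) as [k Hk].
  destruct (with_one_inv_of_gpow (or_intror Hx) Hk) as [Hinv | Hinv]; [| exact Hinv].
  rewrite Hinv. rewrite <- (inv_eq_one Hinv). exact Hx.
Qed.

Lemma subgroup_of_cover :
  infinite_type G -> is_subgroup mul one inv P /\ finite_index mul P.
Proof.
  intro hinf.
  assert (Hne : exists a, P a).
  { destruct (hinf rs) as [x Hx].
    destruct (classic (P x)) as [HPx | HPx]; [eauto |].
    destruct (hcover HPx) as (r & Hr & _ & [-> | (a & Ha & _)]);
      [contradiction | eauto]. }
  destruct Hne as [a Ha].
  assert (H1 : P one) by (rewrite <- (mulgV a); apply hP; auto using inv_mem_of_cover).
  split; [split; [| split]; auto using inv_mem_of_cover |].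
  exists (one :: rs). intro x.
  destruct (classic (P x)) as [HPx | HPx].
  - exists one, x. rewrite mul1g. simpl; auto.
  - destruct (hcover HPx) as (r & Hr & _ & [-> | (b & Hb & ->)]).
    + exists r, one. rewrite mulg1. simpl; auto.
    + exists r, b. simpl; auto.
Qed.

End Cover.

End Group.

Section RightGroup.

Variables (G E : Type) (mul : G -> G -> G) (op : E -> E -> E).
Hypothesis hE : is_right_zero_semigroup op.

Definition fiber (T : G * E -> Prop) (e : E) (g : G) : Prop := T (g, e).

Variable T : G * E -> Prop.

Lemma fiber_subsemigroup e :
  is_subsemigroup (rg_mul mul op) T -> is_subsemigroup mul (fiber T e).
Proof.
  intros hT a b Ha Hb. unfold fiber.
  rewrite <- (hE e e). exact (hT _ _ Ha Hb).
Qed.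

Lemma in_lideal1_snd u v : in_lideal1 (rg_mul mul op) T u v -> snd v = snd u.
Proof. intros [-> | (t & _ & ->)]; simpl; auto. Qed.

Lemma in_rideal1_fiber e g h :
  in_rideal1 (rg_mul mul op) T (g, e) (h, e) -> in_rideal1 mul (fiber T e) g h.
Proof.
  intros [Heq | ([tg te] & Ht & Heq)]; unfold rg_mul in Heq; simpl in Heq.
  - left. congruence.
  - rewrite hE in Heq. injection Heq as -> ->. right. exists tg. auto.
Qed.

Lemma fiber_cover e :
  finite_green_index (rg_mul mul op) T ->
  exists rs, forall x, ~ fiber T e x ->
    exists r, In r rs /\ in_rideal1 mul (fiber T e) x r /\
              in_rideal1 mul (fiber T e) r x.
Proof.
  intros (l & _ & Hcov). exists (map fst l). intros x Hx.
  destruct (Hcov (x, e) Hx) as ([rg re] & Hl & HR & HL).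
  pose proof (in_lideal1_snd (relL_in_lideal1 HL)) as Hre. simpl in Hre. subst re.
  destruct (relR_in_rideal1 HR) as [Hxr Hrx].
  exists rg. split.
  - exact (in_map fst _ _ Hl).
  - split; apply in_rideal1_fiber; assumption.
Qed.

Lemma fiber_transfer (one : G) e f g :
  is_subsemigroup (rg_mul mul op) T -> (forall x, mul x one = x) ->
  fiber T f one -> fiber T e g -> fiber T f g.
Proof.
  intros hT Hone Hf Hg. unfold fiber.
  rewrite <- (Hone g), <- (hE e f). exact (hT _ _ Hg Hf).
Qed.

End RightGroup.

Theorem mainTheorem15
  (G : Type) (mul : G -> G -> G) (one : G) (inv : G -> G)
  (E : Type) (op : E -> E -> E)
  (hG : is_group mul one inv) (hGinf : infinite_type G)
  (hE : is_right_zero_semigroup op)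
  (T : G * E -> Prop)
  (hT : is_subsemigroup (rg_mul mul op) T)
  (hidx : finite_green_index (rg_mul mul op) T) :
  exists H : G -> Prop,
    is_subgroup mul one inv H /\ finite_index mul H /\
    (forall g e, T (g, e) <-> H g).
Proof.
  assert (Hfibers : forall e, is_subgroup mul one inv (fiber T e) /\
                              finite_index mul (fiber T e)).
  { intro e. destruct (fiber_cover hE e hidx) as [rs Hcov].
    exact (subgroup_of_cover hG (fiber_subsemigroup hE e hT) rs Hcov hGinf). }
  assert (Hone : forall e, fiber T e one) by (intro e; apply (Hfibers e)).
  destruct (classic (inhabited E)) as [[e0] | HE].
  - exists (fiber T e0). destruct (Hfibers e0) as [Hsub Hidx].
    split; [exact Hsub | split; [exact Hidx |]].
    intros g e. change (fiber T e g <-> fiber T e0 g).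
    pose proof (mulg1 hG) as Hright.
    split; apply (fiber_transfer (mul := mul) hE) with (one := one); auto.
  - exists (fun _ => True). split; [| split].
    + repeat split.
    + exists (one :: nil). intro x. exists one, x. rewrite (mul1g hG); simpl; auto.
    + intros g e. exfalso. exact (HE (inhabits e)).
Qed.
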